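(* If $\{T_i\}_{i=1}^M$ is an extremal quantum $1$-tester on $\mathcal H_2\otimes\mathcal H_1$ with normalization $\sum_iT_i=I_2\otimes\frac1{d_1}I_1$, then $\{d_1T_i\}_{i=1}^M$ is an extremal POVM on $\mathcal H_2\otimes\mathcal H_1$.
   Context: $d_1=\dim\mathcal H_1<\infty$. A quantum $1$-tester with $M$ outcomes is a family of positive operators $\{T_i\}_{i=1}^M$ on $\mathcal H_2\otimes\mathcal H_1$ with $\sum_iT_i=I_2\otimes\rho$ for a density operator $\rho$; extremal means an extreme point of the convex set of all such testers with $M$ outcomes. An extremal POVM with $M$ outcomes is an extreme point of the convex set of $M$-outcome POVMs (positive operators summing to the identity). *)

(* Complex scalars: an arbitrary numClosedFieldType C
   (e.g. the complex numbers). *)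
From HB Require Import structures.
From mathcomp Require Import all_boot all_order all_algebra.
Set Implicit Arguments. Unset Strict Implicit. Unset Printing Implicit Defensive.
Import Order.TTheory GRing.Theory Num.Theory.
Local Open Scope ring_scope.

(* index of H2 (x) H1 of dimension m*n decomposed into a pair, using
   MathComp's own encoding of 'I_m * 'I_n into 'I_(m*n) (as in mxvec). *)
Definition pair_of_idx (m n : nat) (k : 'I_(m * n)) : 'I_m * 'I_n :=
  enum_val (cast_ord (esym (mxvec_cast m n)) k).

Definition kron (R : pzRingType) (m1 n1 m2 n2 : nat)
    (A : 'M[R]_(m1, n1)) (B : 'M[R]_(m2, n2)) : 'M[R]_(m1 * m2, n1 * n2) :=
  \matrix_(i, j) (A (pair_of_idx i).1 (pair_of_idx j).1 *
                  B (pair_of_idx i).2 (pair_of_idx j).2).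

Definition adjmx (C : numClosedFieldType) (m n : nat) (A : 'M[C]_(m, n)) : 'M[C]_(n, m) :=
  \matrix_(i, j) (A j i)^*.

Definition psdmx (C : numClosedFieldType) (n : nat) (A : 'M[C]_n) : Prop :=
  adjmx A = A /\ forall v : 'cV[C]_n, 0 <= (adjmx v *m A *m v) 0 0.

Definition density (C : numClosedFieldType) (n : nat) (rho : 'M[C]_n) : Prop :=
  psdmx rho /\ \tr rho = 1.

Definition povm (C : numClosedFieldType) (n M : nat) (T : 'I_M -> 'M[C]_n) : Prop :=
  (forall i, psdmx (T i)) /\ \sum_(i < M) T i = 1%:M.

Definition tester (C : numClosedFieldType) (d2 d1 M : nat)
    (T : 'I_M -> 'M[C]_(d2 * d1)) : Prop :=
  (forall i, psdmx (T i)) /\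
  exists rho : 'M[C]_d1, density rho /\ \sum_(i < M) T i = kron (1%:M : 'M[C]_d2) rho.

Definition extremal (C : numClosedFieldType) (n M : nat)
    (S : ('I_M -> 'M[C]_n) -> Prop) (T : 'I_M -> 'M[C]_n) : Prop :=
  S T /\
  forall (t : C) (T1 T2 : 'I_M -> 'M[C]_n),
    0 < t < 1 -> S T1 -> S T2 ->
    (forall i, T i = t *: T1 i + (1 - t) *: T2 i) ->
    (forall i, T1 i = T i /\ T2 i = T i).

(* Rescaling by d1 is a bijection between the testers with normalization
   I_2 (x) I_1/d1 and the POVMs on H2 (x) H1, and it maps convex combinations
   to convex combinations with the same weights.  A decomposition of the POVM
   {d1 T_i} therefore rescales to a decomposition of the extremal tester {T_i}
   into two testers, which must both equal {T_i}. *)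
From HB Require Import structures.
From mathcomp Require Import all_boot all_order all_algebra.
Set Implicit Arguments. Unset Strict Implicit. Unset Printing Implicit Defensive.
Import Order.TTheory GRing.Theory Num.Theory.
Local Open Scope ring_scope.

Lemma pair_of_idx_inj (m n : nat) : injective (@pair_of_idx m n).
Proof. by move=> a b /enum_val_inj /cast_ord_inj. Qed.

Lemma kron1_scalar (R : comPzRingType) (d2 d1 : nat) (c : R) :
  kron (1%:M : 'M[R]_d2) (c *: (1%:M : 'M[R]_d1)) = c *: 1%:M.
Proof.
apply/matrixP => i j; rewrite !mxE -(inj_eq (@pair_of_idx_inj d2 d1) i j).
case: (pair_of_idx i) (pair_of_idx j) => a b [a' b'] /=; rewrite xpair_eqE.
by case: (a == a'); case: (b == b'); rewrite /= ?mulr1 ?mulr0 ?mul1r ?mul0r.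
Qed.

Lemma matrix_eq_dim0 (R : Type) (m n : nat) (A B : 'M[R]_(m, n)) : m = 0%N -> A = B.
Proof. by move=> m0; apply/matrixP => i; move: (ltn_ord i); rewrite [in X in (_ < X)%N]m0. Qed.

Section PositiveOperators.

Variable C : numClosedFieldType.

Lemma psdmxZ (n : nat) (c : C) (A : 'M[C]_n) :
  0 <= c -> psdmx A -> psdmx (c *: A).
Proof.
move=> c_ge0 [A_herm A_pos]; split.
  apply/matrixP => i j; rewrite !mxE rmorphM /= (geC0_conj c_ge0).
  by rewrite -[in RHS]A_herm mxE.
by move=> v; rewrite -scalemxAr -scalemxAl mxE mulr_ge0.
Qed.

Lemma psdmx1 (n : nat) : psdmx (1%:M : 'M[C]_n).
Proof.
split.
  by apply/matrixP => i j; rewrite !mxE eq_sym; case: (_ == _); rewrite ?conjC1 ?conjC0.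
move=> v; rewrite mulmx1 mxE; apply: sumr_ge0 => k _.
by rewrite mxE mulrC -normCK exprn_ge0.
Qed.

Lemma density_maximally_mixed (n : nat) :
  n != 0%N -> density ((n%:R : C)^-1 *: (1%:M : 'M[C]_n)).
Proof.
move=> n_neq0; split; first by apply: psdmxZ (psdmx1 _); rewrite invr_ge0 ler0n.
by rewrite mxtraceZ mxtrace1 mulVf ?pnatr_eq0.
Qed.

End PositiveOperators.

Lemma extremalZ (C : numClosedFieldType) (n M : nat)
    (S S' : ('I_M -> 'M[C]_n) -> Prop) (c : C) (T : 'I_M -> 'M[C]_n) :
  c != 0 ->
  (forall F, S' F -> S (fun i => c^-1 *: F i)) ->
  S' (fun i => c *: T i) -> extremal S T -> extremal S' (fun i => c *: T i).
Proof.
move=> c_neq0 S'S S'cT [_ T_ext]; split=> // t F1 F2 t01 S'F1 S'F2 cT_conv.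
have T_conv i : T i = t *: (c^-1 *: F1 i) + (1 - t) *: (c^-1 *: F2 i).
  by rewrite !scalerA !(mulrC _ c^-1) -!scalerA -scalerDr -cT_conv scalerA mulVf ?scale1r.
move=> i; have [F1_T F2_T] := T_ext t _ _ t01 (S'S _ S'F1) (S'S _ S'F2) T_conv i.
by split; [rewrite -F1_T | rewrite -F2_T]; rewrite scalerA mulfV ?scale1r.
Qed.

Lemma extremal_dim0 (C : numClosedFieldType) (n M : nat)
    (S : ('I_M -> 'M[C]_n) -> Prop) (T : 'I_M -> 'M[C]_n) :
  n = 0%N -> S T -> extremal S T.
Proof. by move=> n0 ST; split=> // *; split; apply: matrix_eq_dim0. Qed.

Section MaximallyMixedTester.

Variables (C : numClosedFieldType) (d2 d1 M : nat).

Lemma tester_povm_scaled (P : 'I_M -> 'M[C]_(d2 * d1)) :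
  d1 != 0%N -> povm P -> tester (fun i => (d1%:R : C)^-1 *: P i).
Proof.
move=> d1_neq0 [P_psd P_sum]; split=> [i|].
  by apply: psdmxZ; rewrite ?invr_ge0 ?ler0n.
exists ((d1%:R : C)^-1 *: 1%:M); split; first exact: density_maximally_mixed.
by rewrite kron1_scalar -scaler_sumr P_sum.
Qed.

Lemma povm_scaled_tester (T : 'I_M -> 'M[C]_(d2 * d1)) :
  (forall i, psdmx (T i)) ->
  \sum_(i < M) T i = kron (1%:M : 'M[C]_d2) ((d1%:R)^-1 *: (1%:M : 'M[C]_d1)) ->
  povm (fun i => d1%:R *: T i).
Proof.
move=> T_psd T_sum; split=> [i|]; first exact: psdmxZ (ler0n _ _) (T_psd i).
have [d1_0|d1_neq0] := eqVneq d1 0%N; first by apply: matrix_eq_dim0; rewrite d1_0 muln0.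
by rewrite -scaler_sumr T_sum kron1_scalar scalerA mulfV ?scale1r ?pnatr_eq0.
Qed.

End MaximallyMixedTester.

Theorem mainTheorem8 (C : numClosedFieldType) (d2 d1 M : nat)
    (T : 'I_M -> 'M[C]_(d2 * d1)) :
  extremal (@tester C d2 d1 M) T ->
  \sum_(i < M) T i = kron (1%:M : 'M[C]_d2) ((d1%:R)^-1 *: (1%:M : 'M[C]_d1)) ->
  extremal (@povm C (d2 * d1) M) (fun i => d1%:R *: T i).
Proof.
move=> T_ext T_sum; have [[T_psd _] _] := T_ext.
have povm_dT := povm_scaled_tester T_psd T_sum.
have [d1_0|d1_neq0] := eqVneq d1 0%N.
  by apply: extremal_dim0 povm_dT; rewrite d1_0 muln0.
apply: extremalZ povm_dT T_ext; first by rewrite pnatr_eq0.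
by move=> P; apply: tester_povm_scaled.
Qed.
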